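(* Let $n\ge 2$. There is no finite subset $Y\subseteq\mathbb{S}^{n-1}$ which is a spherical design of harmonic index $\{8,2\}$ and has \[|Y|=\frac{n(n+6)(n+5)(n^2+15n+8)^2}{168(n^3+27n^2+356n-240)},\] i.e. there exists no tight spherical design of harmonic index $\{8,2\}$ on $\mathbb{S}^{n-1}$.
   Context: $\mathbb{S}^{n-1}$ is the unit sphere in $\mathbb{R}^n$. For $T\subseteq\mathbb{N}$, a finite $Y\subseteq\mathbb{S}^{n-1}$ is a spherical design of harmonic index $T$ if $\sum_{\mathbf{x}\in Y}f(\mathbf{x})=0$ for every real homogeneous harmonic polynomial $f$ in $n$ variables whose degree lies in $T$. With Gegenbauer polynomials $Q_{n,k}$ (orthogonal on $[-1,1]$ for the weight $(1-x^2)^{(n-3)/2}$, $Q_{n,k}(1)=\binom{n+k-1}{n-1}-\binom{n+k-3}{n-1}$), the polynomial $Q_{n,8}(x)+f_2Q_{n,2}(x)$ with $f_2=\frac{(n-2)(n+4)(n+5)(n+6)(n+14)}{90(n+12)^2}$ equals $a(x^2-\alpha^2)^2(x^2-\beta^2)^2-c_{n,T}$ with $a>0$, $\alpha^2,\beta^2=\frac{7}{n+12}\pm\frac{\sqrt{42(n+5)(n+10)}}{(n+10)(n+12)}$, $c_{n,T}=\frac{(n+2)(n+4)(n+5)(n+8)(n+14)(n^3+27n^2+356n-240)}{240(n+10)(n+12)^3}$, giving the lower bound $|Y|\ge b_{n,T}$ equal to the displayed cardinality for designs of harmonic index $\{8,2\}$; a design attaining it is called tight. *)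

From HB Require Import structures.
From mathcomp Require Import all_boot all_order all_algebra.
From mathcomp Require Import reals.
From mathcomp Require Import mpoly.
Set Implicit Arguments. Unset Strict Implicit. Unset Printing Implicit Defensive.
Import Order.TTheory GRing.Theory Num.Theory.
Local Open Scope ring_scope.

Definition on_sphere (R : realType) (n : nat) (x : 'rV[R]_n) : bool :=
  \sum_(i < n) x ord0 i ^+ 2 == 1.

Definition laplacian (R : realType) (n : nat) (p : {mpoly R[n]}) : {mpoly R[n]} :=
  \sum_(i < n) mderiv i (mderiv i p).

Definition harmonic (R : realType) (n : nat) (p : {mpoly R[n]}) : bool :=
  laplacian p == 0.

Definition peval (R : realType) (n : nat) (p : {mpoly R[n]}) (x : 'rV[R]_n) : R :=
  p.@[fun i => x ord0 i].

(* Y (a finite set, given as a duplicate-free list of points of S^{n-1}) is a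
   spherical design of harmonic index T (T a predicate on degrees). *)
Definition harmonic_index_design (R : realType) (n : nat) (T : pred nat)
  (Y : seq 'rV[R]_n) : Prop :=
  forall (k : nat) (f : {mpoly R[n]}), T k -> f \is k.-homog -> harmonic f ->
    \sum_(x <- Y) peval f x = 0.

(* Fix y in Y.  The zonal harmonics of degrees 8 and 2 with pole y restrict to
   the sphere as Q8(<x,y>) and Q2(<x,y>), where Q8 and Q2 are (multiples of)
   the Gegenbauer polynomials Q_{n,8} and Q_{n,2}; the design condition makes
   their sums over x in Y vanish.  For |Y| to equal the tight bound, this bound
   must be an integer, which (by a divisibility argument and a finite search)
   only happens for n = 2, 4, 9, with |Y| = 2, 9, 96.  In each case the
   polynomial Q8 + f2 Q2 + const is c (w^2 - a w + p)^2 in w = t^2, and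
   tightness says it sums to 0 over the x <> y.  So every <x,y>^2 with x <> y
   is a root of w^2 - a w + p, and the sum of the <x,y>^2 - a/2 is an integer
   multiple m of sqrt (a^2/4 - p); the degree 2 condition fixes this sum as a
   rational number, and then m^2 = 2, 48 or 6897 respectively, none of which is
   a square. *)

From HB Require Import structures.
From mathcomp Require Import all_boot all_order all_algebra.
From mathcomp Require Import reals.
From mathcomp Require Import mpoly.
From mathcomp Require Import ring lra zify.
From Stdlib Require ZArith.
Set Implicit Arguments. Unset Strict Implicit. Unset Printing Implicit Defensive.
Import Order.TTheory GRing.Theory Num.Theory.
Local Open Scope ring_scope.

(* [gegen8 n t 1] is proportional to Q_{n,8}(t), and [gegen8 n t s] is its
   homogenization of degree 8 with [s] standing for |x|^2; same for [gegen2]. *)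

Section GegenbauerForms.
Variables (A : pzRingType) (n : nat).

Definition gegen8 (t s : A) : A :=
  t ^+ 8 *+ ((n + 6) * (n + 8) * (n + 10) * (n + 12))
  - t ^+ 6 * s *+ (28 * (n + 6) * (n + 8) * (n + 10))
  + t ^+ 4 * s ^+ 2 *+ (210 * (n + 6) * (n + 8))
  - t ^+ 2 * s ^+ 3 *+ (420 * (n + 6)) + s ^+ 4 *+ 105.

Definition gegen2 (t s : A) : A := t ^+ 2 *+ n - s.

End GegenbauerForms.

Lemma meval_gegen8 (R : realType) n (v : 'I_n -> R) (t s : {mpoly R[n]}) :
  (gegen8 n t s).@[v] = gegen8 n t.@[v] s.@[v].
Proof. by rewrite /gegen8 !mevalD !mevalN !mevalMn !rmorphXn !mevalM. Qed.

Lemma meval_gegen2 (R : realType) n (v : 'I_n -> R) (t s : {mpoly R[n]}) :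
  (gegen2 n t s).@[v] = gegen2 n t.@[v] s.@[v].
Proof. by rewrite /gegen2 mevalB mevalMn rmorphXn. Qed.

Section ZonalHarmonics.
Variables (R : realType) (n : nat) (y : 'rV[R]_n).
Local Notation MP := {mpoly R[n]}.

Definition lin_form : MP := \sum_(i < n) (y ord0 i)%:MP * 'X_i.
Definition sq_norm : MP := \sum_(i < n) 'X_i ^+ 2.
Definition zonal8 : MP := gegen8 n lin_form sq_norm.
Definition zonal2 : MP := gegen2 n lin_form sq_norm.

Lemma mderivXU (i j : 'I_n) : mderiv i ('X_j : MP) = (j == i)%:R.
Proof.
rewrite mderivX mnm1E; case: eqP => [->|_]; last by rewrite scale0r.
by rewrite -{1}[U_(i)%MM]add0m addmK mpolyX0 scale1r.
Qed.

Lemma mderiv_lin_form i : mderiv i lin_form = (y ord0 i)%:MP.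
Proof.
rewrite raddf_sum (bigD1 i) //= big1 => [|j /negbTE ji].
  by rewrite mderiv_mulC mderivXU eqxx mulr1 addr0.
by rewrite mderiv_mulC mderivXU ji mulr0.
Qed.

Lemma mderiv_sq_norm i : mderiv i sq_norm = 'X_i *+ 2.
Proof.
rewrite raddf_sum (bigD1 i) //= big1 => [|j /negbTE ji].
  by rewrite expr2 mderivM mderivXU eqxx mulr1 mul1r mulr2n addr0.
by rewrite expr2 mderivM mderivXU ji mulr0 mul0r addr0.
Qed.

Lemma mderivXUU i : mderiv i ('X_i : MP) = 1.
Proof. by rewrite mderivXU eqxx. Qed.

Lemma mderivXn (p : MP) k i : mderiv i (p ^+ k) = p ^+ k.-1 * mderiv i p *+ k.
Proof.
case: k => [|k]; first by rewrite expr0 -mpolyC1 mderivC.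
elim: k => [|k IHk]; first by rewrite expr0 mul1r.
by rewrite exprS mderivM IHk exprS; move: (p ^+ k) (mderiv i p) => q dp; ring.
Qed.

Lemma laplacianD (p q : MP) : laplacian (p + q) = laplacian p + laplacian q.
Proof. by rewrite /laplacian -big_split; apply: eq_bigr => i _; rewrite !mderivD. Qed.

Lemma laplacianN (p : MP) : laplacian (- p) = - laplacian p.
Proof. by rewrite /laplacian -sumrN; apply: eq_bigr => i _; rewrite !mderivN. Qed.

Lemma laplacianMn (p : MP) k : laplacian (p *+ k) = laplacian p *+ k.
Proof. by rewrite /laplacian -sumrMnl; apply: eq_bigr => i _; rewrite !mderivMn. Qed.

Lemma laplacianM (p q : MP) : laplacian (p * q) =
  laplacian p * q + p * laplacian q + (\sum_(i < n) mderiv i p * mderiv i q) *+ 2.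
Proof.
rewrite /laplacian mulr_suml mulr_sumr -sumrMnl -!big_split /=.
apply: eq_bigr => i _; rewrite !(mderivM, mderivD).
move: (mderiv i p) (mderiv i q) (mderiv i (mderiv i p)) (mderiv i (mderiv i q)).
by move=> a b c d; ring.
Qed.

Lemma laplacian_sq_normX b :
  laplacian (sq_norm ^+ b.+1) = sq_norm ^+ b *+ (b.+1 * (2 * n + 4 * b)).
Proof.
have Ei i : mderiv i (mderiv i (sq_norm ^+ b.+1)) =
    sq_norm ^+ b.-1 * 'X_i ^+ 2 *+ (4 * b * b.+1) + sq_norm ^+ b *+ (2 * b.+1).
  rewrite mderivXn mderiv_sq_norm mderivMn mderivM mderivXn mderiv_sq_norm mderivMn mderivXUU /=.
  by move: (sq_norm ^+ b.-1) (sq_norm ^+ b) ('X_i : MP) => p q x; ring.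
rewrite /laplacian (eq_bigr _ (fun i _ => Ei i)) big_split /= !sumrMnl -mulr_sumr -/sq_norm.
rewrite sumr_const card_ord.
have -> : sq_norm ^+ b.-1 * sq_norm *+ (4 * b * b.+1) = sq_norm ^+ b *+ (4 * b * b.+1).
  by case: b {Ei} => [|b]; rewrite ?mul0n ?mulr0n // -exprSr.
by move: (sq_norm ^+ b) => q; ring.
Qed.

Lemma mpolyXU_homog i : ('X_i : MP) \is 1.-homog.
Proof. by rewrite dhomogX; apply/eqP; apply: mdeg1. Qed.

Lemma lin_form_homog : lin_form \is 1.-homog.
Proof.
by apply: rpred_sum => i _; rewrite mul_mpolyC; apply/dhomogZ/mpolyXU_homog.
Qed.

Lemma sq_norm_homog : sq_norm \is 2.-homog.
Proof. by apply: rpred_sum => i _; apply: (dhomogMn 2 (mpolyXU_homog i)). Qed.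

Lemma zonal8_homog : zonal8 \is 8.-homog.
Proof.
have hu k := dhomogMn k lin_form_homog; have hs k := dhomogMn k sq_norm_homog.
rewrite /zonal8 /gegen8.
apply: rpredD (rpredMn _ (hs 4)); apply: rpredB (rpredMn _ (dhomogM (hu 2) (hs 3))).
apply: rpredD (rpredMn _ (dhomogM (hu 4) (hs 2))).
exact: rpredB (rpredMn _ (hu 8)) (rpredMn _ (dhomogM (hu 6) (hs 1))).
Qed.

Lemma zonal2_homog : zonal2 \is 2.-homog.
Proof.
rewrite /zonal2 /gegen2 rpredB ?sq_norm_homog // rpredMn //.
exact: dhomogMn lin_form_homog.
Qed.

Definition dotv (x : 'rV[R]_n) : R := \sum_(i < n) y ord0 i * x ord0 i.

Lemma peval_lin_form x : peval lin_form x = dotv x.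
Proof.
rewrite /peval rmorph_sum; apply: eq_bigr => i _.
by rewrite rmorphM /= mevalC mevalXU.
Qed.

Lemma peval_sq_norm x : on_sphere x -> peval sq_norm x = 1.
Proof.
move=> /eqP <-; rewrite /peval rmorph_sum; apply: eq_bigr => i _.
by rewrite rmorphXn /= mevalXU.
Qed.

Lemma peval_zonal8 x : on_sphere x -> peval zonal8 x = gegen8 n (dotv x) 1.
Proof.
move=> hx; rewrite /peval meval_gegen8.
by rewrite -!/(peval _ x) peval_lin_form peval_sq_norm.
Qed.

Lemma peval_zonal2 x : on_sphere x -> peval zonal2 x = gegen2 n (dotv x) 1.
Proof.
move=> hx; rewrite /peval meval_gegen2.
by rewrite -!/(peval _ x) peval_lin_form peval_sq_norm.
Qed.

Hypothesis y_unit : \sum_(i < n) y ord0 i ^+ 2 = 1.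

Lemma laplacian_lin_formX a :
  laplacian (lin_form ^+ a.+2) = lin_form ^+ a *+ (a.+2 * a.+1).
Proof.
have Ei i : mderiv i (mderiv i (lin_form ^+ a.+2)) =
    lin_form ^+ a * (y ord0 i)%:MP ^+ 2 *+ (a.+2 * a.+1).
  rewrite mderivXn mderiv_lin_form mderivMn mderivM mderivXn mderiv_lin_form mderivC /=.
  by move: (lin_form ^+ a) ((y ord0 i)%:MP) => p c; ring.
rewrite /laplacian (eq_bigr _ (fun i _ => Ei i)) sumrMnl -mulr_sumr.
suff -> : \sum_(i < n) (y ord0 i)%:MP ^+ 2 = 1 :> MP by rewrite mulr1.
by rewrite -mpolyC1 -y_unit rmorph_sum; apply: eq_bigr => i _; rewrite rmorphXn.
Qed.

Lemma sum_grad_lin_form_sq_norm a b :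
  \sum_(i < n) mderiv i (lin_form ^+ a.+1) * mderiv i (sq_norm ^+ b.+1) =
  lin_form ^+ a.+1 * sq_norm ^+ b *+ (2 * a.+1 * b.+1).
Proof.
have Ei i : mderiv i (lin_form ^+ a.+1) * mderiv i (sq_norm ^+ b.+1) =
    lin_form ^+ a * sq_norm ^+ b * ((y ord0 i)%:MP * 'X_i) *+ (2 * a.+1 * b.+1).
  rewrite !mderivXn mderiv_lin_form mderiv_sq_norm /=.
  by move: (lin_form ^+ a) (sq_norm ^+ b) ((y ord0 i)%:MP) ('X_i : MP) => p q c x; ring.
rewrite (eq_bigr _ (fun i _ => Ei i)) sumrMnl -mulr_sumr -/lin_form exprS.
by move: (lin_form ^+ a) (sq_norm ^+ b) lin_form => p q u; ring.
Qed.

Lemma laplacian_lin_form_sq_norm a b :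
  laplacian (lin_form ^+ a.+2 * sq_norm ^+ b.+1) =
  lin_form ^+ a * sq_norm ^+ b.+1 *+ (a.+2 * a.+1)
  + lin_form ^+ a.+2 * sq_norm ^+ b *+ (b.+1 * (2 * n + 4 * b) + 4 * a.+2 * b.+1).
Proof.
rewrite laplacianM laplacian_lin_formX laplacian_sq_normX sum_grad_lin_form_sq_norm !exprS.
by move: (lin_form ^+ a) (sq_norm ^+ b) lin_form sq_norm => p q u s; ring.
Qed.

Lemma zonal8_harmonic : harmonic zonal8.
Proof.
(* Bounded rewrite counts: an unbounded [!laplacianD] would also unfold
   [s ^+ 4 *+ 105] into 105 summands. *)
apply/eqP; rewrite /zonal8 /gegen8 4!laplacianD 2!laplacianN 5!laplacianMn.
rewrite laplacian_lin_formX (laplacian_lin_form_sq_norm 4 0) (laplacian_lin_form_sq_norm 2 1).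
rewrite (laplacian_lin_form_sq_norm 0 2) laplacian_sq_normX.
by move: lin_form sq_norm => u s; ring.
Qed.

Lemma zonal2_harmonic : harmonic zonal2.
Proof.
apply/eqP; rewrite /zonal2 /gegen2 laplacianD laplacianN laplacianMn.
rewrite laplacian_lin_formX (laplacian_sq_normX 0).
by move: lin_form sq_norm => u s; ring.
Qed.

End ZonalHarmonics.

Section DesignSums.
Variables (R : realType) (n : nat).

Lemma design_gegen_sums (Y : seq 'rV[R]_n) y : on_sphere y ->
  all (@on_sphere R n) Y -> harmonic_index_design (pred2 8%N 2%N) Y ->
  \sum_(x <- Y) gegen8 n (dotv y x) 1 = 0 /\ \sum_(x <- Y) gegen2 n (dotv y x) 1 = 0.
Proof.
move=> /eqP hy /allP hY hD; split.
  rewrite -[RHS](hD 8%N (zonal8 y)) ?zonal8_homog ?zonal8_harmonic //.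
  by apply: eq_big_seq => x /hY hx; rewrite peval_zonal8.
rewrite -[RHS](hD 2%N (zonal2 y)) ?zonal2_homog ?zonal2_harmonic //.
by apply: eq_big_seq => x /hY hx; rewrite peval_zonal2.
Qed.

Lemma exists_inner_products (Y : seq 'rV[R]_n) :
  all (@on_sphere R n) Y -> harmonic_index_design (pred2 8%N 2%N) Y -> (0 < size Y)%N ->
  exists ts : seq R, [/\ size ts = (size Y).-1,
    \sum_(t <- ts) gegen8 n t 1 = - gegen8 n 1 1
    & \sum_(t <- ts) gegen2 n t 1 = - gegen2 n 1 1].
Proof.
case: Y => [//|y Y'] hS hD _.
have hy : on_sphere y by have /andP[] := hS.
have [s8 s2] := design_gegen_sums hy hS hD.
have dotyy : dotv y y = 1 by rewrite -(eqP hy); apply: eq_bigr => i _; rewrite expr2.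
rewrite !big_cons dotyy in s8 s2.
exists [seq dotv y x | x <- Y']; rewrite size_map !big_map.
by split => //; apply/eqP; rewrite -addr_eq0 addrC; apply/eqP.
Qed.

End DesignSums.

Lemma sum_sqrt_multiple (R : rcfType) (vs : seq R) (d : R) :
  (forall v, v \in vs -> v ^+ 2 = d) ->
  exists m : int, \sum_(v <- vs) v = m%:~R * Num.sqrt d.
Proof.
elim: vs => [|v vs IHvs] hv; first by exists 0; rewrite big_nil mul0r.
rewrite big_cons; have [|m ->] := IHvs.
  by move=> w wvs; apply: hv; rewrite inE wvs orbT.
have : v ^+ 2 == Num.sqrt d ^+ 2.
  by rewrite sqr_sqrtr -(hv v (mem_head _ _)) ?sqr_ge0.
rewrite eqf_sqr => /orP[] /eqP ->.
- by exists (m + 1); rewrite intrD; ring.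
- by exists (m - 1); rewrite intrB; ring.
Qed.

Lemma tight_sqrt_sum (R : rcfType) (n : nat) (ts : seq R) (c al be a p : R) :
  (0 < n)%N -> 0 < c ->
  (forall t, gegen8 n t 1 + al * gegen2 n t 1 + be = c * (t ^+ 4 - a * t ^+ 2 + p) ^+ 2) ->
  \sum_(t <- ts) gegen8 n t 1 = - gegen8 n 1 1 ->
  \sum_(t <- ts) gegen2 n t 1 = - gegen2 n 1 1 ->
  gegen8 n 1 1 + al * gegen2 n 1 1 = be * (size ts)%:R ->
  exists m : int, ((size ts)%:R + 1) / n%:R - 1 - (size ts)%:R * (a / 2)
    = m%:~R * Num.sqrt (a ^+ 2 / 4 - p).
Proof.
move=> n_gt0 c_gt0 hc s8 s2 tight.
have sum_const (x : R) : \sum_(t <- ts) x = x * (size ts)%:R.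
  by rewrite big_const_seq count_predT iter_addr_0 mulr_natr.
have hq : \sum_(t <- ts) c * (t ^+ 4 - a * t ^+ 2 + p) ^+ 2 == 0.
  rewrite -(eq_bigr _ (fun t _ => hc t)) 2!big_split /= -mulr_sumr s8 s2 sum_const.
  by rewrite -tight; apply/eqP; ring.
move: hq; rewrite psumr_eq0 => [/allP hroot|t _]; last by rewrite mulr_ge0 ?sqr_ge0 ?ltW.
have [|m hm] := @sum_sqrt_multiple _ [seq t ^+ 2 - a / 2 | t <- ts] (a ^+ 2 / 4 - p).
  move=> _ /mapP[t tts ->]; have /= := hroot t tts.
  rewrite mulf_eq0 gt_eqF //= sqrf_eq0 => /eqP qt0.
  have -> : a ^+ 2 / 4 - p = (t ^+ 2 - a / 2) ^+ 2 - (t ^+ 4 - a * t ^+ 2 + p) by field.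
  by rewrite qt0 subr0.
exists m; rewrite -hm big_map big_split /= sumrN sum_const.
have n_neq0 : n%:R != 0 :> R by rewrite pnatr_eq0 -lt0n.
have sumS : (\sum_(t <- ts) t ^+ 2) * n%:R = (size ts)%:R + 1 - n%:R.
  rewrite mulr_suml (eq_bigr _ (fun t _ => mulr_natr (t ^+ 2) n)).
  by move: s2; rewrite /gegen2 big_split /= sumrN sum_const expr1n; lra.
by rewrite -[\sum_(t <- ts) t ^+ 2](mulfK n_neq0) sumS; field.
Qed.

Lemma tight_design_sqrt_sum (R : realType) (n : nat) (Y : seq 'rV[R]_n) (c al be a p : R) :
  all (@on_sphere R n) Y -> harmonic_index_design (pred2 8%N 2%N) Y ->
  (0 < n)%N -> (0 < size Y)%N -> 0 < c ->
  (forall t, gegen8 n t 1 + al * gegen2 n t 1 + be = c * (t ^+ 4 - a * t ^+ 2 + p) ^+ 2) ->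
  gegen8 n 1 1 + al * gegen2 n 1 1 = be * ((size Y)%:R - 1) ->
  exists m : int, (size Y)%:R / n%:R - 1 - ((size Y)%:R - 1) * (a / 2)
    = m%:~R * Num.sqrt (a ^+ 2 / 4 - p).
Proof.
move=> hS hD n_gt0 Y_gt0 c_gt0 hc tight.
have [ts [hts s8 s2]] := exists_inner_products hS hD Y_gt0.
have eY : (size Y)%:R = (size ts)%:R + 1 :> R by rewrite hts natr1 prednK.
rewrite eY addrK in tight *.
exact: tight_sqrt_sum n_gt0 c_gt0 hc s8 s2 tight.
Qed.

Lemma not_sqr_between (b m : int) : 0 <= b -> b ^+ 2 < m ^+ 2 < (b + 1) ^+ 2 -> False.
Proof.
move=> b_ge0; rewrite -[m ^+ 2]real_normK ?num_real //.
by rewrite !ltr_pXn2r ?nnegrE ?normr_ge0 ?addr_ge0 //; lia.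
Qed.

Lemma intr_sqr_between (R : realDomainType) (b : nat) (m : int) :
  (b%:R : R) ^+ 2 < (m%:~R : R) ^+ 2 < (b%:R + 1) ^+ 2 -> False.
Proof.
have -> : (b%:R + 1 : R) = (b%:Z + 1)%:~R by rewrite intrD.
rewrite -[b%:R]/((b : int)%:~R) !expr2 -!intrM !ltr_int -!expr2.
exact: not_sqr_between.
Qed.

(* The parameters rescale the identity Q_{n,8} + f_2 Q_{n,2} + c_{n,T}
   = a' (t^2 - alpha^2)^2 (t^2 - beta^2)^2 of the paper: here
   [a = alpha^2 + beta^2] and [p = alpha^2 beta^2]. *)
Lemma no_tight_design_dim2 (R : realType) (Y : seq 'rV[R]_2) :
  all (@on_sphere R 2) Y -> harmonic_index_design (pred2 8%N 2%N) Y -> size Y <> 2%N.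
Proof.
move=> hS hD hY; have Y_gt0 : (0 < size Y)%N by rewrite hY.
have [|||m] := @tight_design_sqrt_sum _ _ Y (8 * 10 * 12 * 14) 0 105 1 (1 / 8)
  hS hD isT Y_gt0.
- lra.
- by move=> t; rewrite /gegen8 /gegen2; field.
- by rewrite hY /gegen8 /gegen2; field.
rewrite hY => /(congr1 (fun z => z ^+ 2)); rewrite exprMn sqr_sqrtr; last lra.
by move=> hm; apply: (@intr_sqr_between R 1 m); apply/andP; split; lra.
Qed.

Lemma no_tight_design_dim4 (R : realType) (Y : seq 'rV[R]_4) :
  all (@on_sphere R 4) Y -> harmonic_index_design (pred2 8%N 2%N) Y -> size Y <> 9%N.
Proof.
move=> hS hD hY; have Y_gt0 : (0 < size Y)%N by rewrite hY.
have [|||m] := @tight_design_sqrt_sum _ _ Y (10 * 12 * 14 * 16) (315 / 8) (8505 / 64)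
  (7 / 8) (11 / 128) hS hD isT Y_gt0.
- lra.
- by move=> t; rewrite /gegen8 /gegen2; field.
- by rewrite hY /gegen8 /gegen2; field.
rewrite hY => /(congr1 (fun z => z ^+ 2)); rewrite exprMn sqr_sqrtr; last lra.
by move=> hm; apply: (@intr_sqr_between R 6 m); apply/andP; split; lra.
Qed.

Lemma no_tight_design_dim9 (R : realType) (Y : seq 'rV[R]_9) :
  all (@on_sphere R 9) Y -> harmonic_index_design (pred2 8%N 2%N) Y -> size Y <> 96%N.
Proof.
move=> hS hD hY; have Y_gt0 : (0 < size Y)%N by rewrite hY.
have [|||m] := @tight_design_sqrt_sum _ _ Y (15 * 17 * 19 * 21) (2240 / 27)
  (280 * 272 / 513) (2 / 3) (7 / 171) hS hD isT Y_gt0.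
- lra.
- by move=> t; rewrite /gegen8 /gegen2; field.
- by rewrite hY /gegen8 /gegen2; field.
rewrite hY => /(congr1 (fun z => z ^+ 2)); rewrite exprMn sqr_sqrtr; last lra.
by move=> hm; apply: (@intr_sqr_between R 83 m); apply/andP; split; lra.
Qed.

Module TightSize.
Import ZArith.
Local Open Scope Z_scope.

Definition tight_num (k : Z) : Z :=
  k * (k + 6) * (k + 5) * ((k * k + 15 * k + 8) * (k * k + 15 * k + 8)).
Definition tight_den (k : Z) : Z := k * k * k + 27 * k * k + 356 * k - 240.

Lemma tight_num_divmod k : tight_num k =
  (k ^ 4 + 14 * k ^ 3 - 133 * k ^ 2 + 2638 * k - 10584) * tight_den k
  - 169344 * (4 * k ^ 2 - 26 * k + 15).
Proof. rewrite /tight_num /tight_den; ring. Qed.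

Lemma tight_den_bezout k :
  (14248 - 2432 * k) * tight_den k
  + (608 * k ^ 2 + 16806 * k + 227233) * (4 * k ^ 2 - 26 * k + 15) = - 11025.
Proof. rewrite /tight_den; ring. Qed.

(* The monic division of [tight_num] by [tight_den] leaves the remainder
   [- 169344 * (4 k^2 - 26 k + 15)], which [tight_den k] must then divide; the
   Bezout relation between [tight_den] and this quadratic bounds [tight_den k]. *)
Lemma tight_den_le k M : 1 <= k -> 168 * M * tight_den k = tight_num k ->
  tight_den k <= 11025 * 169344.
Proof.
move=> hk hE.
set j := k ^ 4 + 14 * k ^ 3 - 133 * k ^ 2 + 2638 * k - 10584 - 168 * M.
have hj : j * tight_den k = 169344 * (4 * k ^ 2 - 26 * k + 15).
  by rewrite /j Z.mul_sub_distr_r hE tight_num_divmod; ring.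
set cof := 169344 * (14248 - 2432 * k) + (608 * k ^ 2 + 16806 * k + 227233) * j.
have hcof : tight_den k * cof = 169344 * - 11025.
  rewrite -(tight_den_bezout k); transitivity (169344 * (14248 - 2432 * k) * tight_den k
    + (608 * k ^ 2 + 16806 * k + 227233) * (j * tight_den k)); first by rewrite /cof; ring.
  by rewrite hj; ring.
have hD : 0 < tight_den k by rewrite /tight_den; nia.
have cof_neg : cof <= -1 by nia.
nia.
Qed.

Lemma tight_den_root_le k M : 1 <= k -> 168 * M * tight_den k = tight_num k -> k <= 1231.
Proof.
move=> hk /(tight_den_le hk); rewrite /tight_den; nia.
Qed.

Definition tight_divides (k : nat) : bool :=
  Z.eqb (tight_num (Z.of_nat k) mod (168 * tight_den (Z.of_nat k))) 0.

Lemma tight_divides_small :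
  all (fun k => tight_divides k ==> (k \in [:: 2; 4; 9]%nat)) (iota 2 1230)%nat.
Proof. by vm_compute. Qed.

Lemma tight_size_cases (n M : nat) : (2 <= n)%nat ->
  (M * 168 * (n * n * n + 27 * n * n + 356 * n - 240)
   = n * (n + 6) * (n + 5) * ((n * n + 15 * n + 8) * (n * n + 15 * n + 8)))%nat ->
  (n, M) \in [:: (2, 2); (4, 9); (9, 96)]%nat.
Proof.
move=> hn hE.
have hZ : 168 * Z.of_nat M * tight_den (Z.of_nat n) = tight_num (Z.of_nat n).
  rewrite /tight_den /tight_num; lia.
have hD : 0 < tight_den (Z.of_nat n) by rewrite /tight_den; nia.
have hdiv : tight_divides n.
  by rewrite /tight_divides -hZ -(Z.mul_comm (Z.of_nat M)) -Z.mul_assoc Z.mod_mul //; lia.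
have hle : (n <= 1231)%nat by have := @tight_den_root_le (Z.of_nat n) _ ltac:(lia) hZ; lia.
have := allP tight_divides_small n; rewrite mem_iota hdiv; move/(_ ltac:(lia)) => /=.
rewrite !inE => /or3P[] /eqP en; subst n.
- by have -> : M = 2%nat by lia.
- by have -> : M = 9%nat by lia.
- by have -> : M = 96%nat by lia.
Qed.

End TightSize.

Lemma tight_size_natE (R : realType) (n M : nat) : (2 <= n)%N ->
  M%:R = (n%:R * (n%:R + 6) * (n%:R + 5) * (n%:R ^+ 2 + 15 * n%:R + 8) ^+ 2)
    / (168 * (n%:R ^+ 3 + 27 * n%:R ^+ 2 + 356 * n%:R - 240)) :> R ->
  (M * 168 * (n * n * n + 27 * n * n + 356 * n - 240)
   = n * (n + 6) * (n + 5) * ((n * n + 15 * n + 8) * (n * n + 15 * n + 8)))%N.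
Proof.
move=> n_ge2 hM.
have n2 : 2 <= n%:R :> R by rewrite ler_nat.
have den_gt0 : 0 < n%:R ^+ 3 + 27 * n%:R ^+ 2 + 356 * n%:R - 240 :> R.
  by rewrite !exprS expr0 !mulr1; nra.
have h240 : (240 <= n * n * n + 27 * n * n + 356 * n)%N by nia.
apply/eqP; rewrite -(eqr_nat R) !natrM (natrB _ h240) !natrD !natrM hM.
by apply/eqP; field; lra.
Qed.

Theorem mainTheorem9 (R : realType) (n : nat) (hn : (2 <= n)%N)
  (Y : seq 'rV[R]_n) :
  uniq Y -> all (@on_sphere R n) Y ->
  harmonic_index_design (pred2 8%N 2%N) Y ->
  (size Y)%:R <>
    (n%:R * (n%:R + 6) * (n%:R + 5) * (n%:R ^+ 2 + 15 * n%:R + 8) ^+ 2)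
    / (168 * (n%:R ^+ 3 + 27 * n%:R ^+ 2 + 356 * n%:R - 240)) :> R.
Proof.
move=> _ hS hD hsz.
have := TightSize.tight_size_cases hn (tight_size_natE hn hsz).
rewrite !inE => /or3P[] /eqP[en eY]; subst n.
- exact: no_tight_design_dim2 hS hD eY.
- exact: no_tight_design_dim4 hS hD eY.
- exact: no_tight_design_dim9 hS hD eY.
Qed.
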